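(* Let $m\ge 1$, $k\ge 2$ and $n\ge k-1$. Let $P(\mathbf x)=\prod_{i=1}^n\big((x_i-1)^{\underline m}\big)^k$. Let $P_0$ be the unique polynomial in $V_{m,k}$ such that $P-P_0$ has a zero of multiplicity at least $k$ at every point of $mB^n\setminus\{\mathbf 0\}$ and a zero of multiplicity at least $k-1$ at $\mathbf 0$. Then the homogeneous component of $P_0$ of degree $mn+(m+1)(k-1)-1$ is divisible by $(x_1\cdots x_n)^m$.
   Context: $mB^n=\{0,1,\ldots,m\}^n$. Falling factorials are $(y)^{\underline 0}=1$ and $(y)^{\underline j}=y(y-1)\cdots(y-j+1)$ for $j\ge1$, so $(x_i-1)^{\underline m}=(x_i-1)(x_i-2)\cdots(x_i-m)$. A polynomial has a zero of multiplicity at least $k$ at $\mathbf a$ if all its partial derivatives of order less than $k$ vanish at $\mathbf a$. For an integer $k\ge 2$, a polynomial $Q\in\mathbb{R}[x_1,\ldots,x_n]$ is called $(m,k)$-reduced if two conditions hold: $\deg Q\le mn+(m+1)(k-1)-1$, and no monomial of $Q$ is divisible by $x_{i_1}^{m+1}\cdots x_{i_k}^{m+1}$ for any indices $i_1,\ldots,i_k$ (not necessarily distinct). $V_{m,k}$ is the space of $(m,k)$-reduced polynomials. The existence and uniqueness of $P_0$ are known. *)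

From Stdlib Require Import Rdefinitions.
From HB Require Import structures.
From mathcomp Require Import all_boot all_order all_algebra.
From mathcomp Require Import mpoly.
From mathcomp Require Import Rstruct.

Set Implicit Arguments.
Unset Strict Implicit.
Unset Printing Implicit Defensive.

Import Order.TTheory GRing.Theory Num.Theory.
Local Open Scope ring_scope.

Definition ffall (n m : nat) (i : 'I_n) : {mpoly R[n]} :=
  \prod_(j < m) ('X_i - (j.+1)%:R%:MP).

Definition Ppoly (n m k : nat) : {mpoly R[n]} :=
  \prod_(i < n) (ffall m i) ^+ k.

Definition mult_ge (n : nat) (Q : {mpoly R[n]}) (r : nat) (a : 'I_n -> R) : Prop :=
  forall al : 'X_{1..n}, (mdeg al < r)%N -> (Q^`M[al]).@[a] = 0.

(* The monomial x^s is divisible by x_{i_1}^{m+1} ... x_{i_k}^{m+1} for some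
   indices i_1..i_k (not necessarily distinct) given by f : 'I_k -> 'I_n. *)
Definition mon_div_by (n m k : nat) (s : 'X_{1..n}) : Prop :=
  exists f : 'I_k -> 'I_n,
    forall i : 'I_n, ((m.+1) * #|[set j | f j == i]| <= s i)%N.

(* (m,k)-reduced polynomials: the space V_{m,k}. *)
Definition reduced (n m k : nat) (Q : {mpoly R[n]}) : Prop :=
  (msize Q <= (m * n + m.+1 * (k - 1) - 1).+1)%N /\
  forall s : 'X_{1..n}, s \in msupp Q -> ~ mon_div_by m k s.

Definition grid_pt (n m : nat) (a : 'I_n -> 'I_m.+1) : 'I_n -> R :=
  fun i => ((a i : nat)%:R : R).

Definition homog_comp (n : nat) (d : nat) (Q : {mpoly R[n]}) : {mpoly R[n]} :=
  pihomog mdeg d Q.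

From Stdlib Require Import Rdefinitions.
From HB Require Import structures.
From mathcomp Require Import all_boot all_order all_algebra.
From mathcomp Require Import mpoly.
From mathcomp Require Import Rstruct.
From mathcomp Require Import ring.
From mathcomp Require Import zify.

(* Suppose a monomial x^s of top degree d = mn + (m+1)(k-1) - 1 occurs in P0
   with s_j < m.  As P0 is reduced, the quotients s_i / (m+1) sum to at most
   k - 1, and counting degrees forces them to sum to exactly k - 1, with
   remainders m - 1 at j and m elsewhere.  Hermite interpolation on the nodes
   {0, ..., m} (avoiding 0 for the coordinate j) gives, for each i, a
   combination of derivatives of order at most s_i / (m+1) that is dual to
   x_i^{s_i} on polynomials of degree at most s_i.  Their tensor product
   extracts the coefficient of x^s from P0, since every other monomial of
   degree at most d has some exponent below s_i; but it only involves
   derivatives of total order < k at grid points with x_j <> 0, where P0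
   vanishes to order k just like P.  So the coefficient of x^s is 0. *)

Set Implicit Arguments.
Unset Strict Implicit.
Unset Printing Implicit Defensive.

Import GRing.Theory Num.Theory.
Local Open Scope ring_scope.

Section HermiteInterpolation.
Variable F : numFieldType.
Implicit Types (p q : {poly F}) (a : F) (s : seq F).

Lemma derivnS_XsubC_mul a q b :
  (('X - a%:P) * q)^`(b.+1) = q^`(b) *+ b.+1 + ('X - a%:P) * q^`(b.+1).
Proof.
elim: b => [|b IH]; first by rewrite derivn1 derivM derivXsubC mul1r derivn0.
rewrite derivnS IH derivD derivMn derivM derivXsubC mul1r -!derivnS.
by rewrite addrA -mulrSr.
Qed.

Lemma XsubC_exp_dvdp a tau p :
  (forall b, (b < tau)%N -> (p^`(b)).[a] = 0) -> ('X - a%:P) ^+ tau %| p.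
Proof.
elim: tau p => [|tau IH] p p_a; first by rewrite expr0 dvd1p.
have /factor_theorem [q p_eq] : root p a.
  by apply/rootP; rewrite -[p]derivn0; apply: p_a.
rewrite p_eq exprSr dvdp_mul2r ?polyXsubC_eq0 //; apply: IH => b lt_b_tau.
have /eqP := p_a b.+1 lt_b_tau.
rewrite p_eq mulrC derivnS_XsubC_mul hornerD hornerMn hornerM hornerXsubC subrr.
by rewrite mul0r addr0 mulrn_eq0 /= => /eqP.
Qed.

Lemma prod_XsubC_exp_dvdp s tau p : uniq s ->
  (forall a, a \in s -> forall b, (b < tau)%N -> (p^`(b)).[a] = 0) ->
  \prod_(a <- s) ('X - a%:P) ^+ tau %| p.
Proof.
elim: s => [|a s IH] /=; first by rewrite big_nil dvd1p.
move=> /andP[a_notin_s uniq_s] p_s; rewrite big_cons Gauss_dvdp.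
  rewrite XsubC_exp_dvdp ?IH // => [x x_s|b lt_b_tau].
    by apply: p_s; rewrite inE x_s orbT.
  by apply: p_s; rewrite ?inE ?eqxx.
apply: coprimep_expl; rewrite coprimep_sym coprimep_XsubC.
rewrite /root horner_prod prodf_seq_neq0; apply/allP => x x_s /=.
rewrite horner_exp hornerXsubC expf_neq0 // subr_eq0.
by apply: contraNneq a_notin_s => ->.
Qed.

Lemma size_prod_XsubC_exp s tau :
  size (\prod_(a <- s) ('X - a%:P) ^+ tau) = (size s * tau).+1.
Proof.
elim: s => [|a s IH]; first by rewrite big_nil size_poly1.
rewrite big_cons mulrC size_Mmonic ?monic_exp ?monicXsubC -?size_poly_eq0 ?IH //.
by rewrite size_exp_XsubC /= mulSn addnC addSn.
Qed.

Lemma hermite_vanishing_eq0 s tau p : uniq s ->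
  (forall a, a \in s -> forall b, (b < tau)%N -> (p^`(b)).[a] = 0) ->
  (size p <= size s * tau)%N -> p = 0.
Proof.
move=> uniq_s p_s size_p; apply/eqP; apply: contraTT size_p => p_neq0.
have := dvdp_leq p_neq0 (prod_XsubC_exp_dvdp uniq_s p_s).
by rewrite size_prod_XsubC_exp -ltnNge.
Qed.

Lemma horner_derivn_poly N (v : nat -> F) b x :
  ((\poly_(i < N) v i)^`(b)).[x] = \sum_(i < N) v i * (('X^i)^`(b)).[x].
Proof.
rewrite poly_def linear_sum horner_sum; apply: eq_bigr => i _.
by rewrite linearZ /= hornerZ.
Qed.

(* Unisolvence of the conditions [p^`(ord t)].[node t] = 0 makes their matrix on
   the monomial basis invertible, so the leading-coefficient functional is a
   combination of them. *)
Lemma hermite_dual_exists (T : finType) (node : T -> F) (ord : T -> nat) :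
  (forall p, (size p <= #|T|)%N -> (forall t, (p^`(ord t)).[node t] = 0) -> p = 0) ->
  exists c : T -> F, forall e, (e < #|T|)%N ->
    \sum_t c t * (('X^e)^`(ord t)).[node t] = (e == #|T|.-1)%:R.
Proof.
move=> unisolvent; set N := #|T|.
have [N0|N_gt0] := posnP N; first by exists (fun _ => 0) => e; rewrite N0.
pose A : 'M[F]_N :=
  \matrix_(i, j) (('X^i)^`(ord (enum_val j))).[node (enum_val j)].
have A_unit : A \in unitmx.
  rewrite -row_free_unit -kermx_eq0; apply/rowV0P => v /sub_kermxP vA0.
  pose p := \poly_(i < N) oapp (v 0) 0 (insub i).
  have p0 : p = 0.
    apply: unisolvent => [|t]; rewrite ?size_poly // /p.
    have := congr1 (fun M : 'M[F]_(1, N) => M 0 (enum_rank t)) vA0.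
    rewrite horner_derivn_poly !mxE => {}vA0; apply: etrans _ vA0.
    by apply: eq_bigr => i _; rewrite mxE enum_rankK valK.
  apply/matrixP => i j; rewrite ord1 mxE.
  by have := congr1 (fun q => q`_j) p0; rewrite coef_poly ltn_ord coef0 valK.
pose last_idx := Ordinal (etrans (ltn_predL N) N_gt0).
pose w := invmx A *m delta_mx last_idx (0 : 'I_1).
exists (fun t => w (enum_rank t) 0) => e lt_e_N.
have := congr1 (fun M : 'M[F]_(N, 1) => M (Ordinal lt_e_N) 0)
  (mulKVmx A_unit (delta_mx last_idx (0 : 'I_1))).
rewrite !mxE eqxx andbT => <-.
rewrite [LHS](reindex (enum_val : 'I_#|T| -> T)) /=; last first.
  by exists enum_rank => t _; rewrite ?enum_rankK ?enum_valK.
by apply: eq_bigr => i _; rewrite enum_valK mulrC [A _ _]mxE.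
Qed.

End HermiteInterpolation.

Definition grid_form (m k : nat) (c : 'I_m.+1 * 'I_k -> R) (p : {poly R}) : R :=
  \sum_x c x * (p^`(x.2)).[(x.1 : nat)%:R].

Lemma grid_form_delta m k (S : pred 'I_m.+1) tau e0 :
  (tau <= k)%N -> e0.+1 = (#|S| * tau)%N ->
  exists c : 'I_m.+1 * 'I_k -> R,
    (forall x, c x != 0 -> (x.1 \in S) && (x.2 < tau)%N) /\
    forall e, (e <= e0)%N -> grid_form c 'X^e = (e == e0)%:R.
Proof.
move=> le_tau_k size_S.
pose T := ({x : 'I_m.+1 | x \in S} * 'I_tau)%type.
have card_T : #|{: T}| = e0.+1 by rewrite card_prod card_sig card_ord size_S.
pose node (t : T) : R := (val t.1 : nat)%:R.
pose ord (t : T) : nat := t.2.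
have unisolvent (p : {poly R}) : (size p <= #|{: T}|)%N ->
    (forall t, (p^`(ord t)).[node t] = 0) -> p = 0.
  move=> size_p p_T.
  apply: (@hermite_vanishing_eq0 _ [seq (x : nat)%:R | x : 'I_m.+1 <- enum S] tau).
  - rewrite map_inj_uniq ?enum_uniq // => x y /eqP.
    by rewrite eqr_nat => /eqP /val_inj.
  - move=> _ /mapP [x x_S ->] b lt_b_tau.
    by have := p_T (exist _ x _, Ordinal lt_b_tau); apply; rewrite -mem_enum.
  - by rewrite size_map -cardE -size_S -card_T.
have [c' c'_dual] := hermite_dual_exists unisolvent.
pose embed (t : T) : 'I_m.+1 * 'I_k := (val t.1, widen_ord le_tau_k t.2).
exists (fun x => \sum_(t | embed t == x) c' t); split.
  move=> x; apply: contraNT => x_notin; rewrite big_pred0 // => t.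
  apply: contraNF x_notin => /eqP <- /=.
  by rewrite (valP t.1) ltn_ord.
move=> e le_e_e0; rewrite /grid_form.
under eq_bigr => x _ do rewrite mulr_suml.
rewrite (exchange_big_dep xpredT) //= -[e0]/(e0.+1.-1) -card_T -c'_dual.
  by apply: eq_bigr => t _; rewrite (big_pred1 (embed t)) // => x; rewrite eq_sym.
by rewrite card_T.
Qed.

Section PowerFactor.
Variables (F : comNzRingType) (n : nat).
Implicit Types (p q : {mpoly F[n]}).

Lemma mderiv_exprS p i k : (p ^+ k.+1)^`M(i) = p ^+ k * (p^`M(i) *+ k.+1).
Proof.
elim: k => [|k IH]; first by rewrite expr1 expr0 mul1r.
by rewrite exprS mderivM IH exprS; ring.
Qed.

Lemma mderivm_exprM p q k (be : 'X_{1..n}) : (mdeg be <= k)%N ->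
  exists q', (p ^+ k * q)^`M[be] = p ^+ (k - mdeg be) * q'.
Proof.
elim: {be}(mdeg be) {-2}be (erefl (mdeg be)) k q => [|r IH] be deg_be k q le_r_k.
  exists q; rewrite deg_be subn0.
  by move/eqP: deg_be; rewrite mdeg_eq0 => /eqP ->; rewrite mderivm0m.
have [i be_i] : exists i, (0 < be i)%N.
  apply/existsP; apply: contraTT isT; rewrite negb_exists => /forallP be0.
  suff : mdeg be = 0%N by rewrite deg_be.
  by rewrite mdegE big1 // => i _; apply/eqP; rewrite -leqn0 leqNgt be0.
have be_split : be = (U_(i) + (be - U_(i)))%MM.
  by rewrite addmC submK //; apply/mnm_lepP => l; rewrite mnm1E; case: eqP => [<-|].
have deg_be' : mdeg (be - U_(i))%MM = r.
  by move: deg_be; rewrite {1}be_split mdegD mdeg1 add1n => -[].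
case: k le_r_k => [|k]; rewrite deg_be // ltnS => le_r_k.
rewrite be_split mderivmDm mderivmU1m mderivM mderiv_exprS.
have -> : p ^+ k * (p^`M(i) *+ k.+1) * q + p ^+ k.+1 * q^`M(i) =
    p ^+ k * (p^`M(i) *+ k.+1 * q + p * q^`M(i)) by rewrite exprS; ring.
have le_be'_k : (mdeg (be - U_(i))%MM <= k)%N by rewrite deg_be'.
have [q' ->] := IH _ deg_be' k (p^`M(i) *+ k.+1 * q + p * q^`M(i)) le_be'_k.
by exists q'; rewrite deg_be' subSS.
Qed.

End PowerFactor.

Lemma mult_geB n (f g : {mpoly R[n]}) r a :
  mult_ge f r a -> mult_ge g r a -> mult_ge (f - g) r a.
Proof. by move=> f_a g_a al lt_al_r; rewrite mderivmB mevalB f_a ?g_a ?subrr. Qed.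

Lemma mult_ge_XsubC_exprM n (j : 'I_n) (c : R) k (q : {mpoly R[n]}) a :
  a j = c -> mult_ge (('X_j - c%:MP) ^+ k * q) k a.
Proof.
move=> a_j al lt_al_k.
have [q' ->] := mderivm_exprM ('X_j - c%:MP) q (ltnW lt_al_k).
rewrite mevalM rmorphXn /= mevalB mevalXU mevalC a_j subrr expr0n.
by rewrite subn_eq0 leqNgt lt_al_k mul0r.
Qed.

Lemma mult_ge_Ppoly n m k (a : 'I_n -> 'I_m.+1) j :
  a j != ord0 -> mult_ge (Ppoly n m k) k (grid_pt a).
Proof.
move=> a_j_neq0.
have lt_aj_m : ((a j).-1 < m)%N by rewrite -ltnS prednK ?lt0n // ltn_ord.
rewrite /Ppoly (bigD1 j) //= /ffall (bigD1 (Ordinal lt_aj_m)) //= prednK ?lt0n //.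
by rewrite exprMn -mulrA; apply: mult_ge_XsubC_exprM.
Qed.

Lemma mnm_ltn_exists n (u s : 'X_{1..n}) :
  (mdeg u <= mdeg s)%N -> u != s -> exists i, (u i < s i)%N.
Proof.
move=> deg_us u_neq_s; apply/existsP; apply: contraNT u_neq_s.
rewrite negb_exists => /forallP not_lt; apply/eqP.
have le_su : (s <= u)%MM by apply/mnm_lepP => i; rewrite leqNgt not_lt.
have deg_us0 : mdeg (u - s)%MM = 0%N.
  by have := congr1 mdeg (submK le_su); rewrite mdegD; lia.
by rewrite -(submK le_su); move/eqP: deg_us0; rewrite mdeg_eq0 => /eqP ->; rewrite add0m.
Qed.

Section TensorForm.
Variables n m k : nat.
Implicit Types (c : 'I_n -> 'I_m.+1 * 'I_k -> R) (f : {mpoly R[n]}).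

Definition tensor_form c f : R :=
  \sum_(A : {ffun 'I_n -> 'I_m.+1 * 'I_k}) (\prod_i c i (A i)) *
    (f^`M[[multinom ((A i).2 : nat) | i < n]]).@[grid_pt (fun i => (A i).1)].

Lemma tensor_form_X c u : tensor_form c 'X_[u] = \prod_i grid_form (c i) 'X^(u i).
Proof.
rewrite /grid_form bigA_distr_bigA; apply: eq_bigr => A _.
rewrite mderivmX mevalZ mevalX natr_prod -!big_split /=; apply: eq_bigr => i _.
by rewrite derivnXn hornerMn hornerXn !mnmE mulr_natl.
Qed.

Lemma tensor_formE c f :
  tensor_form c f = \sum_(u <- msupp f) f@_u * tensor_form c 'X_[u].
Proof.
rewrite /tensor_form {1}(mpolyE f).
under eq_bigr => A _ do rewrite raddf_sum raddf_sum mulr_sumr.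
rewrite exchange_big /=; apply: eq_bigr => u _.
rewrite mulr_sumr; apply: eq_bigr => A _.
by rewrite mderivmZ mevalZ mulrCA.
Qed.

Lemma tensor_form_coef c f (s : 'X_{1..n}) :
  (forall i e, (e <= s i)%N -> grid_form (c i) 'X^e = (e == s i)%:R) ->
  (forall u, u \in msupp f -> (mdeg u <= mdeg s)%N) ->
  tensor_form c f = f@_s.
Proof.
move=> c_dual deg_f; rewrite tensor_formE.
rewrite (eq_big_seq (fun u => f@_u * (u == s)%:R)) => [|u u_f]; last first.
  rewrite tensor_form_X; congr (_ * _); have [->|u_neq_s] := eqVneq u s.
    by rewrite big1 // => i _; rewrite c_dual // eqxx.
  have [i lt_ui_si] := mnm_ltn_exists (deg_f u u_f) u_neq_s.
  by rewrite (bigD1 i) //= c_dual ?(ltnW lt_ui_si) // (ltn_eqF lt_ui_si) mul0r.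
have [s_f|s_notin_f] := boolP (s \in msupp f).
  rewrite (big_rem s s_f) /= eqxx mulr1 big1_seq ?addr0 // => u /andP [_ u_f].
  by case: eqP u_f => [->|_]; rewrite ?mem_rem_uniqF ?mulr0.
rewrite memN_msupp_eq0 // big1_seq // => u /andP [_ u_f].
by case: eqP u_f => [->|_]; rewrite ?(negbTE s_notin_f) ?mulr0.
Qed.

Lemma tensor_form_eq0 c f r :
  (forall A : {ffun 'I_n -> 'I_m.+1 * 'I_k}, \prod_i c i (A i) != 0 ->
     (\sum_i ((A i).2 : nat) < r)%N /\ mult_ge f r (grid_pt (fun i => (A i).1))) ->
  tensor_form c f = 0.
Proof.
move=> vanish; rewrite /tensor_form big1 // => A _.
have [->|/vanish [deg_A f_A]] := eqVneq (\prod_i c i (A i)) 0; first by rewrite mul0r.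
by rewrite f_A ?mulr0 // mdegE (eq_bigr _ (fun i _ => mnmE _ i)).
Qed.

End TensorForm.

Lemma card_set_sum (T : finType) (P : pred T) :
  #|[set x | P x]| = (\sum_x P x)%N.
Proof.
by rewrite -sum1_card big_mkcond /=; apply: eq_bigr => x _; rewrite inE; case: (P x).
Qed.

Lemma bounded_fibres_fun_exists n k (t : 'I_n -> nat) : (k <= \sum_i t i)%N ->
  exists f : 'I_k -> 'I_n, forall i, (#|[set x | f x == i]| <= t i)%N.
Proof.
elim: k t => [|k IH] t le_k_t.
  have f0 : 'I_0 -> 'I_n by case.
  by exists f0 => i; rewrite card_set_sum big_ord0.
have [i0 t_i0] : exists i0, (0 < t i0)%N.
  apply/existsP; apply: contraLR le_k_t; rewrite negb_exists => /forallP t0.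
  by rewrite -ltnNge big1 // => i _; apply/eqP; rewrite -leqn0 leqNgt t0.
pose t' i := (t i - (i == i0))%N.
have le_k_t' : (k <= \sum_i t' i)%N.
  rewrite (bigD1 i0) //= in le_k_t; rewrite (bigD1 i0) //= /t' eqxx.
  rewrite (eq_bigr t) => [|i /negbTE ->]; last by rewrite subn0.
  by move: le_k_t t_i0; lia.
have [f' f'_fibres] := IH t' le_k_t'.
exists (fun x => if insub (x : nat) is Some y then f' y else i0) => i.
rewrite card_set_sum big_ord_recr /= insubF ?ltnn //.
rewrite (eq_bigr (fun x => (f' x == i) : nat)) => [|x _]; last first.
  by have -> : insub (widen_ord (leqnSn k) x : nat) = Some x by exact: valK.
rewrite -card_set_sum; have := f'_fibres i; rewrite /t'.
by case: eqVneq => [->|_]; move: t_i0; lia.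
Qed.

Lemma mon_div_by_of_sum_divn n m k (s : 'X_{1..n}) :
  (k <= \sum_i s i %/ m.+1)%N -> mon_div_by m k s.
Proof.
move=> /bounded_fibres_fun_exists [f f_fibres]; exists f => i.
by rewrite mulnC (leq_trans _ (leq_divM (s i) m.+1)) // leq_mul2r f_fibres orbT.
Qed.

Lemma top_monomial_residues n m k (s : 'X_{1..n}) j :
  (1 <= m)%N -> (2 <= k)%N -> ~ mon_div_by m k s ->
  mdeg s = (m * n + m.+1 * (k - 1) - 1)%N -> (s j < m)%N ->
  (\sum_i s i %/ m.+1 = k - 1)%N /\ forall i, (s i %% m.+1 = m - (i == j))%N.
Proof.
move=> m_gt0 k_ge2 not_div deg_s lt_sj_m.
pose bound i := (m - (i == j))%N.
set quo := (\sum_i s i %/ m.+1)%N; set rem := (\sum_i s i %% m.+1)%N.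
have le_quo : (quo <= k - 1)%N.
  rewrite leqNgt; apply: contra_notN not_div => lt_quo.
  by apply: mon_div_by_of_sum_divn; rewrite -/quo; move: lt_quo; lia.
have le_rem i : (s i %% m.+1 <= bound i)%N.
  rewrite /bound; case: eqVneq => [->|_]; last by rewrite subn0 -ltnS ltn_mod.
  rewrite modn_small; last by rewrite ltnS ltnW.
  by rewrite subn1 -ltnS prednK.
have deg_split : mdeg s = (quo * m.+1 + rem)%N.
  by rewrite mdegE (eq_bigr _ (fun i _ => divn_eq (s i) m.+1)) big_split big_distrl.
have sum_bound : (\sum_i bound i + 1 = m * n)%N.
  have sum_one : (\sum_i (i == j : nat) = 1)%N.
    by rewrite (bigD1 j) //= eqxx big1 // => i /negbTE ->.
  rewrite -[in LHS]sum_one -big_split /= (eq_bigr (fun _ => m)) => [|i _].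
    by rewrite sum_nat_const card_ord mulnC.
  by rewrite /bound subnK // (leq_trans (leq_b1 _) m_gt0).
have le_rem_bound : (rem <= \sum_i bound i)%N by apply: leq_sum.
have [sum_quo sum_rem] : quo = (k - 1)%N /\ rem = \sum_i bound i.
  move: deg_s le_quo le_rem_bound sum_bound; rewrite deg_split [(m.+1 * _)%N]mulnC.
  clearbody quo rem; move: (\sum_i bound i) (m * n)%N => B mn.
  case: (ltnP quo (k - 1)) => [lt_quo|ge_quo].
    have := leq_mul2r m.+1 quo.+1 (k - 1); rewrite lt_quo orbT mulSn.
    by move: (quo * m.+1)%N ((k - 1) * m.+1)%N => X Y; lia.
  move=> deg_s le_quo; have sum_quo : quo = (k - 1)%N by lia.
  by move: deg_s; rewrite sum_quo; move: ((k - 1) * m.+1)%N => Y; lia.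
split=> // i; apply/eqP; rewrite eqn_leq le_rem /=.
have : (\sum_i (bound i - s i %% m.+1) == 0)%N by rewrite sumnB // -/rem sum_rem subnn.
by rewrite sum_nat_eq0 => /forallP /(_ i) /implyP /(_ isT); rewrite subn_eq0.
Qed.

Lemma grid_forms_dual n m k (s : 'X_{1..n}) j :
  (2 <= k)%N -> (\sum_i s i %/ m.+1 = k - 1)%N -> (s j < m)%N ->
  (forall i, s i %% m.+1 = m - (i == j))%N ->
  exists c : 'I_n -> 'I_m.+1 * 'I_k -> R,
    (forall i x, c i x != 0 -> ((i == j) ==> (x.1 != ord0)) && (x.2 <= s i %/ m.+1)%N) /\
    forall i e, (e <= s i)%N -> grid_form (c i) 'X^e = (e == s i)%:R.
Proof.
move=> k_ge2 sum_quo lt_sj_m rem_s.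
suff /fin_all_exists [c c_spec] : forall i, exists ci : 'I_m.+1 * 'I_k -> R,
    (forall x, ci x != 0 -> ((i == j) ==> (x.1 != ord0)) && (x.2 <= s i %/ m.+1)%N) /\
    forall e, (e <= s i)%N -> grid_form ci 'X^e = (e == s i)%:R.
  by exists c; split=> i; case: (c_spec i).
move=> i; pose S := [pred x : 'I_m.+1 | (i == j) ==> (x != ord0)].
have card_S : #|S| = (m.+1 - (i == j))%N.
  case: eqVneq => [ij|/negbTE i_neq_j].
    transitivity #|predC1 (ord0 : 'I_m.+1)|; last by rewrite cardC1 card_ord subn1.
    by apply: eq_card => x; rewrite /S !inE ij eqxx.
  transitivity #|'I_m.+1|; last by rewrite card_ord subn0.
  by apply: eq_card => x; rewrite /S !inE i_neq_j.
have le_quo_k : ((s i %/ m.+1).+1 <= k)%N.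
  by move: sum_quo k_ge2; rewrite (bigD1 i) //=; lia.
have size_S : (s i).+1 = (#|S| * (s i %/ m.+1).+1)%N.
  rewrite card_S {1}(divn_eq (s i) m.+1) rem_s; case: eqVneq => [ij|_] /=.
    have -> : (s i %/ m.+1 = 0)%N by rewrite ij divn_small // ltnS ltnW.
    by rewrite mul0n add0n muln1 !subn1 prednK //; apply: leq_ltn_trans lt_sj_m.
  by rewrite !subn0 [RHS]mulnC mulSn addSn addnC.
have [ci [ci_supp ci_dual]] := grid_form_delta le_quo_k size_S.
by exists ci; split=> // x /ci_supp /andP[x_S x_lt]; rewrite -ltnS x_lt andbT.
Qed.

Lemma homog_comp_dvd n m d (f : {mpoly R[n]}) :
  (forall s, s \in msupp f -> mdeg s = d -> forall i, (m <= s i)%N) ->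
  exists q : {mpoly R[n]}, homog_comp d f = q * (\prod_(i < n) 'X_i) ^+ m.
Proof.
move=> top_ge; pose mm := [multinom m | i < n].
exists (\sum_(u <- msupp f | mdeg u == d) f@_u *: 'X_[u - mm]).
have -> : (\prod_(i < n) 'X_i) ^+ m = 'X_[mm] :> {mpoly R[n]}.
  by rewrite mpolyXE_id -prodrXl; apply: eq_bigr => i _; rewrite mnmE.
rewrite /homog_comp pihomogE mulr_suml -big_filter -[RHS]big_filter.
apply: eq_big_seq => u; rewrite mem_filter => /andP [/eqP deg_u u_f].
rewrite -scalerAl -mpolyXD submK //.
by apply/mnm_lepP => i; rewrite mnmE; apply: top_ge.
Qed.

Lemma top_monomial_ge n m k (P0 : {mpoly R[n]}) (s : 'X_{1..n}) j :
  (1 <= m)%N -> (2 <= k)%N -> reduced m k P0 ->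
  (forall a : 'I_n -> 'I_m.+1, (exists i, a i != ord0) -> mult_ge P0 k (grid_pt a)) ->
  s \in msupp P0 -> mdeg s = (m * n + m.+1 * (k - 1) - 1)%N -> (m <= s j)%N.
Proof.
move=> m_gt0 k_ge2 [size_P0 P0_red] P0_grid s_P0 deg_s.
rewrite leqNgt; apply/negP => lt_sj_m.
have [sum_quo rem_s] := top_monomial_residues m_gt0 k_ge2 (P0_red s s_P0) deg_s lt_sj_m.
have [c [c_supp c_dual]] := grid_forms_dual k_ge2 sum_quo lt_sj_m rem_s.
have : tensor_form c P0 = P0@_s.
  apply: tensor_form_coef => // u /msize_mdeg_lt.
  by move: size_P0; rewrite deg_s; lia.
have -> : tensor_form c P0 = 0.
  apply: (tensor_form_eq0 (r := k)) => A /prodf_neq0 c_A; split.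
    have le_ord : (\sum_i ((A i).2 : nat) <= \sum_i s i %/ m.+1)%N.
      by apply: leq_sum => i _; have /andP[_ ->] := c_supp i _ (c_A i isT).
    by apply: leq_ltn_trans le_ord _; rewrite sum_quo subn1 ltn_predL ltnW.
  by apply: P0_grid; exists j; have /andP[] := c_supp j _ (c_A j isT); rewrite eqxx.
by move/esym/eqP; apply/negP; rewrite -mcoeff_msupp.
Qed.

(* The dual functionals only see grid points with a nonzero [j]-th coordinate,
   so neither the condition at the origin nor [k - 1 <= n] is needed. *)
Theorem claim5p3 (m k n : nat) (P0 : {mpoly R[n]}) :
  (1 <= m)%N -> (2 <= k)%N -> (k - 1 <= n)%N ->
  reduced m k P0 ->
  (forall a : 'I_n -> 'I_m.+1, (exists i, a i != ord0) ->
      mult_ge (Ppoly n m k - P0) k (grid_pt a)) ->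
  mult_ge (Ppoly n m k - P0) k.-1 (fun _ => 0) ->
  exists Q : {mpoly R[n]},
    homog_comp (m * n + m.+1 * (k - 1) - 1) P0 = Q * (\prod_(i < n) 'X_i) ^+ m.
Proof.
move=> m_gt0 k_ge2 _ P0_red PsubP0_grid _.
have P0_grid (a : 'I_n -> 'I_m.+1) : (exists i, a i != ord0) -> mult_ge P0 k (grid_pt a).
  move=> [j a_j]; rewrite -[P0](subKr (Ppoly n m k)).
  by apply: mult_geB; [exact: mult_ge_Ppoly a_j | apply: PsubP0_grid; exists j].
apply: homog_comp_dvd => s s_P0 deg_s i.
exact: top_monomial_ge m_gt0 k_ge2 P0_red P0_grid s_P0 deg_s.
Qed.
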